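(* Let $\mu_1,\mu_2$ be finite Borel measures on $M$ with $\mu_1\geqslant\mu_2$, i.e. $\mu_1=\mu_2+m$ for some non-negative Borel measure $m$. Let $\mathcal A$ be a finite measurable partition and $\mathcal B$ a measurable partition. Then $$H_{\mu_1}(\mathcal A\mid\mathcal B)\geqslant H_{\mu_2}(\mathcal A\mid\mathcal B).$$
   Context: For a probability measure $\mu$, $H_\mu(\mathcal A\mid\mathcal B)=\int H_{\mu_{x,\mathcal B}}(\mathcal A)\,\mathrm d\mu(x)$ with $\{\mu_{x,\mathcal B}\}$ the conditional measures of $\mu$ on atoms of $\mathcal B$ and $H_\nu(\mathcal A)=-\sum_{A\in\mathcal A}\nu(A)\log\nu(A)$. For a finite nonzero Borel measure $\mu$, $H_\mu(\mathcal A\mid\mathcal B):=\mu(M)\cdot H_{\bar\mu}(\mathcal A\mid\mathcal B)$ with $\bar\mu=\mu/\mu(M)$ (and $0$ for the zero measure). *)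

From HB Require Import structures.
From mathcomp Require Import all_boot all_order all_algebra.
From mathcomp Require Import all_classical all_reals all_analysis.
From mathcomp Require Import measurable_realfun.
Set Implicit Arguments. Unset Strict Implicit. Unset Printing Implicit Defensive.
Import Order.TTheory GRing.Theory Num.Theory.
Local Open Scope classical_set_scope.
Local Open Scope ring_scope.

Definition finite_meas_partition d (M : measurableType d) n (A : 'I_n -> set M) :=
  (forall i, measurable (A i)) /\
  (forall i j, i != j -> A i `&` A j = set0) /\
  \big[setU/set0]_(i < n) A i = setT.

Definition xlogx (R : realType) (p : R) : R := if p == 0 then 0 else p * ln p.

Definition entropy d (M : measurableType d) (R : realType)
  (nu : probability M R) n (A : 'I_n -> set M) : R :=
  - \sum_(i < n) xlogx (fine (nu (A i))).

(* The measurable partition B is given as the partition into the fibres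
   pi^-1 {pi x} of a measurable map pi : M -> Y.
   A system of conditional measures of the (finite) measure mu on the atoms
   of B is a family y |-> nu y of probability measures (indexed by the atom
   pi x) such that y |-> nu y C is measurable and
   mu (C `&` pi^-1 D) = \int_{pi^-1 D} nu (pi x) C dmu(x).
   (This condition is invariant under scaling mu, so it is the same as for
    the normalized measure mu / mu(M).) *)
Definition is_cond_measures d (M : measurableType d) d' (Y : measurableType d')
  (R : realType) (mu : {measure set M -> \bar R}) (pi : M -> Y)
  (nu : Y -> probability M R) :=
  forall C, measurable C ->
    measurable_fun [set: Y] (fun y : Y => nu y C : \bar R) /\
    forall D, measurable D ->
      mu (C `&` pi @^-1` D) = (\int[mu]_(x in pi @^-1` D) nu (pi x) C)%E.

(* H_mu(A|B) = mu(M) * \int H_{mu_{x,B}}(A) d(mu/mu(M)) = \int H_{mu_{x,B}}(A) dmu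
   (and 0 for the zero measure, which the right-hand side also gives). *)
Definition cond_entropy d (M : measurableType d) d' (Y : measurableType d')
  (R : realType) (mu : {measure set M -> \bar R}) (pi : M -> Y)
  (nu : Y -> probability M R) n (A : 'I_n -> set M) : \bar R :=
  (\int[mu]_x (entropy (nu (pi x)) A)%:E)%E.

From HB Require Import structures.
From mathcomp Require Import all_boot all_order all_algebra.
From mathcomp Require Import all_classical all_reals all_analysis.
From mathcomp Require Import measurable_realfun lra.
Import Order.TTheory GRing.Theory Num.Theory.
Import HBNNSimple.
Local Open Scope classical_set_scope.
Local Open Scope ring_scope.

(* Write p_i and q_i for the masses of the atom A_i under the conditional
   measures of mu2 and mu1.  Gibbs' inequality, -sum p_i ln p_i <=
   -sum p_i ln q_i, bounds H_mu2(A|B) by sum_i \int p_i (-ln q_i) dmu2.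
   Since the integrals of p_i and q_i over the B-saturated sets pi^-1 S are
   mu2(A_i & pi^-1 S) <= mu1(A_i & pi^-1 S), approximating -ln q_i, a
   function of pi x, by simple functions of pi x shows that this bound only
   grows when (mu2, p_i) is replaced by (mu1, q_i); the result is
   sum_i \int q_i (-ln q_i) dmu1 = H_mu1(A|B). *)

Section gibbs_inequality.
Context {R : realType}.
Local Open Scope ereal_scope.

(* [-ln q], with [-ln 0 = +oo]: as [0 * +oo = 0] in [\bar R], [p * neg_ln q]
   follows the convention [0 ln 0 = 0] and is [+oo] when [p > 0 = q]. *)
Definition neg_ln (q : R) : \bar R := if q == 0%R then +oo else (- ln q)%:E.

Lemma neg_ln_ge0 q : (q <= 1)%R -> 0 <= neg_ln q.
Proof.
move=> q1; rewrite /neg_ln; case: ifP => // _.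
by rewrite lee_fin oppr_ge0 ln_le0.
Qed.

Lemma measurable_neg_ln : measurable_fun setT neg_ln.
Proof.
apply: measurable_fun_ifT; first exact: measurable_fun_eqr.
  exact: measurable_cst.
by apply/measurable_EFinP; exact: measurableT_comp.
Qed.

Lemma oppr_xlogxE q : (- xlogx q)%:E = q%:E * neg_ln q.
Proof.
rewrite /neg_ln /xlogx; case: ifP => [/eqP ->|_]; first by rewrite mul0e oppr0.
by rewrite -EFinM mulrN.
Qed.

(* [ln x <= x - 1] at [x = q / p], multiplied by [p]. *)
Lemma oppr_xlogx_le p q : (0 <= p)%R -> (0 <= q)%R ->
  (- xlogx p)%:E <= p%:E * neg_ln q + (q - p)%:E.
Proof.
move=> p0 q0; have [->|pn0] := eqVneq p 0%R.
  by rewrite /xlogx eqxx mul0e add0e lee_fin; lra.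
have pp : (0 < p)%R by rewrite lt_neqAle eq_sym pn0.
rewrite /neg_ln /xlogx (negbTE pn0).
have [_|qn0] := eqVneq q 0%R.
  by rewrite gt0_muley ?lte_fin // addye ?leey.
have qp : (0 < q)%R by rewrite lt_neqAle eq_sym qn0.
rewrite -EFinM -EFinD lee_fin.
have : (ln (q / p) <= q / p - 1)%R.
  have := @le_ln1Dx R (q / p - 1); rewrite addrCA subrr addr0; apply.
  by rewrite ltrBrDl subrr divr_gt0.
rewrite ln_div ?posrE // => /(ler_wpM2l (ltW pp)).
rewrite mulrBr mulrBr mulr1 mulrCA divff ?mulr1 //; lra.
Qed.

Lemma gibbs_inequality n (p q : 'I_n -> R) :
  (forall i, 0 <= p i)%R -> (forall i, 0 <= q i)%R ->
  (\sum_i q i <= \sum_i p i)%R ->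
  (- \sum_i xlogx (p i))%:E <= \sum_i (p i)%:E * neg_ln (q i).
Proof.
move=> p0 q0 sqp; rewrite -sumrN -sumEFin.
apply: (@le_trans _ _ (\sum_i ((p i)%:E * neg_ln (q i) + (q i - p i)%:E))).
  by apply: lee_sum => i _; exact: oppr_xlogx_le.
rewrite big_split /= sumEFin sumrB; apply: geeDl.
by rewrite lee_fin subr_le0.
Qed.

End gibbs_inequality.

Section integral_comp_le.
Local Open Scope ereal_scope.
Context d (M : measurableType d) d' (Y : measurableType d') (R : realType).
Variables (pi : M -> Y) (mpi : measurable_fun setT pi).

Lemma integral_mul_nnsfun_comp (mu : {measure set M -> \bar R}) (f : M -> R)
    (h : {nnsfun Y >-> R}) :
  (forall x, 0 <= f x)%R -> measurable_fun setT f ->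
  \int[mu]_x ((f x)%:E * (h (pi x))%:E) =
  \sum_(r \in range h)
    r%:E * \int[mu]_(x in pi @^-1` (h @^-1` [set r])) (f x)%:E.
Proof.
move=> f0 mf; under eq_integral => x _.
  rewrite -EFinM fimfunE mulr_fsumr -fsumEFin; last exact: fimfunP.
  over.
rewrite ge0_integral_fsum //; last 2 first.
- move=> r; apply/measurable_EFinP/measurable_funM => //.
  apply: measurable_funM => //.
  exact: measurableT_comp (measurable_indic _) mpi.
- move=> r x _; rewrite EFinM mule_ge0 ?lee_fin //.
  by have := nnfun_muleindic_ge0 h r (pi x); rewrite -EFinM lee_fin.
apply: eq_fsbigr => r; rewrite inE => -[y _ <-].
have mS : measurable (pi @^-1` (h @^-1` [set h y])).
  by rewrite -[_ @^-1` _]setTI; apply: mpi => //; exact: measurable_funPTI.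
rewrite -[pi @^-1` _]setTI integral_mkcondr -ge0_integralZl //.
- apply: eq_integral => x _; rewrite epatch_indic /= -!EFinM.
  by rewrite mulrCA mulrA.
- apply/(measurable_restrictT _ _).1 => //.
  exact/measurable_funTS/measurable_EFinP.
- by move=> x _; rewrite /patch; case: ifP; rewrite ?lee_fin.
- by rewrite lee_fin; exact: fun_ge0.
Qed.

Lemma cvg_integral_mul_approx_comp (mu : {measure set M -> \bar R})
    (f : M -> R) (psi : Y -> \bar R) (mpsi : measurable_fun setT psi) :
  (forall x, 0 <= f x)%R -> measurable_fun setT f -> (forall y, 0 <= psi y) ->
  \int[mu]_x ((f x)%:E * (nnsfun_approx measurableT mpsi n (pi x))%:E)
    @[n --> \oo] --> \int[mu]_x ((f x)%:E * psi (pi x)).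
Proof.
move=> f0 mf psi0.
have psi_lim x : (f x)%:E * psi (pi x) =
    limn (fun n => (f x)%:E * (nnsfun_approx measurableT mpsi n (pi x))%:E).
  by apply/esym/cvg_lim => //; apply: cvgeZl => //; exact: cvg_nnsfun_approx.
under [X in _ --> X]eq_integral do rewrite psi_lim.
apply: cvg_monotone_convergence => //.
- move=> n; apply/measurable_EFinP/measurable_funM => //.
  exact: measurableT_comp mpi.
- by move=> n x _; rewrite mule_ge0 ?lee_fin.
- move=> x _ a b ab; apply: lee_wpmul2l; first by rewrite lee_fin.
  by rewrite lee_fin; exact/lefP/nd_nnsfun_approx.
Qed.

Lemma le_integral_mul_comp (mu1 mu2 : {measure set M -> \bar R})
    (f1 f2 : M -> R) (psi : Y -> \bar R) :
  (forall x, 0 <= f1 x)%R -> measurable_fun setT f1 ->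
  (forall x, 0 <= f2 x)%R -> measurable_fun setT f2 ->
  (forall S, measurable S ->
    \int[mu2]_(x in pi @^-1` S) (f2 x)%:E <=
    \int[mu1]_(x in pi @^-1` S) (f1 x)%:E) ->
  (forall y, 0 <= psi y) -> measurable_fun setT psi ->
  \int[mu2]_x ((f2 x)%:E * psi (pi x)) <= \int[mu1]_x ((f1 x)%:E * psi (pi x)).
Proof.
move=> f10 mf1 f20 mf2 le_f psi0 mpsi.
apply: (lee_cvg_to (cvg_integral_mul_approx_comp mu2 f2 psi mpsi f20 mf2 psi0)
  (cvg_integral_mul_approx_comp mu1 f1 psi mpsi f10 mf1 psi0)).
apply: nearW => n; rewrite !integral_mul_nnsfun_comp //.
apply: lee_fsum => // r [y _ <-].
by apply: lee_wpmul2l; [rewrite lee_fin|exact: le_f].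
Qed.

End integral_comp_le.

Section cross_entropy.
Local Open Scope ereal_scope.
Context {d} {M : measurableType d} {R : realType}.
Implicit Types nu : probability M R.

Definition cross_entropy nu nu' {n} (A : 'I_n -> set M) : \bar R :=
  \sum_i (fine (nu (A i)))%:E * neg_ln (fine (nu' (A i))).

Lemma fine_probability_ge0 nu C : (0 <= fine (nu C))%R.
Proof. exact/fine_ge0/measure_ge0. Qed.

Lemma fine_probability_le1 nu C : measurable C -> (fine (nu C) <= 1)%R.
Proof.
by move=> mC; rewrite -lee_fin fineK ?probability_le1 ?fin_num_measure.
Qed.

Lemma cross_entropy_ge0 nu nu' n (A : 'I_n -> set M) :
  (forall i, measurable (A i)) -> 0 <= cross_entropy nu nu' A.
Proof.
move=> mA; apply: sume_ge0 => i _.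
by rewrite mule_ge0 ?lee_fin ?fine_probability_ge0 ?neg_ln_ge0
  ?fine_probability_le1.
Qed.

Lemma sum_fine_partition nu n (A : 'I_n -> set M) :
  finite_meas_partition A -> (\sum_i fine (nu (A i)) = 1)%R.
Proof.
move=> [mA [dA cA]]; apply: EFin_inj; rewrite -sumEFin.
under eq_bigr do rewrite fineK ?(fin_num_measure nu _ (mA _)) //.
rewrite -measure_bigsetU_ord // => [|i j _ _ [x Aijx]].
  by rewrite cA; exact: probability_setT.
by apply/eqP; apply: contraTT isT => /dA Aij0; rewrite Aij0 in Aijx.
Qed.

Lemma entropyE nu n (A : 'I_n -> set M) :
  (entropy nu A)%:E = cross_entropy nu nu A.
Proof.
by rewrite /entropy -sumrN -sumEFin; under eq_bigr do rewrite oppr_xlogxE.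
Qed.

Lemma entropy_le_cross nu nu' n (A : 'I_n -> set M) :
  finite_meas_partition A -> (entropy nu A)%:E <= cross_entropy nu nu' A.
Proof.
move=> HA; apply: gibbs_inequality => [i|i|]; try exact: fine_probability_ge0.
by rewrite !sum_fine_partition.
Qed.

End cross_entropy.

Section conditional_entropy.
Local Open Scope ereal_scope.
Context {d} {M : measurableType d} {d'} {Y : measurableType d'} {R : realType}.
Context { pi : M -> Y } (mpi : measurable_fun setT pi).
Implicit Types (mu : {measure set M -> \bar R}) (nu : Y -> probability M R).

Definition is_kernel nu :=
  forall C, measurable C -> measurable_fun setT (fun y => nu y C).

Lemma is_cond_measures_kernel {mu nu} :
  is_cond_measures mu pi nu -> is_kernel nu.
Proof. by move=> Hnu C mC; exact: (Hnu C mC).1. Qed.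

Lemma measurable_fine_kernel {nu C} : is_kernel nu -> measurable C ->
  measurable_fun setT (fun y => fine (nu y C)).
Proof. by move=> knu mC; apply: measurableT_comp => //; exact: knu. Qed.

Lemma measurable_fine_kernel_comp {nu C} : is_kernel nu -> measurable C ->
  measurable_fun setT (fun x => fine (nu (pi x) C)).
Proof.
by move=> knu mC; exact: measurableT_comp (measurable_fine_kernel knu mC) mpi.
Qed.

Lemma integral_fine_cond {mu nu} C D : is_cond_measures mu pi nu ->
  measurable C -> measurable D ->
  \int[mu]_(x in pi @^-1` D) (fine (nu (pi x) C))%:E = mu (C `&` pi @^-1` D).
Proof.
move=> Hnu mC mD; rewrite ((Hnu C mC).2 D mD).
by apply: eq_integral => x _; rewrite fineK ?fin_num_measure.
Qed.

Lemma le_integral_fine_cond {mu1 mu2 nu1 nu2 C} (psi : Y -> \bar R) :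
  (forall S, measurable S -> mu2 S <= mu1 S) ->
  is_cond_measures mu1 pi nu1 -> is_cond_measures mu2 pi nu2 -> measurable C ->
  (forall y, 0 <= psi y) -> measurable_fun setT psi ->
  \int[mu2]_x ((fine (nu2 (pi x) C))%:E * psi (pi x)) <=
  \int[mu1]_x ((fine (nu1 (pi x) C))%:E * psi (pi x)).
Proof.
move=> le_mu Hnu1 Hnu2 mC psi0 mpsi.
apply: le_integral_mul_comp => // [x||x||S mS].
- exact: fine_probability_ge0.
- exact: measurable_fine_kernel_comp (is_cond_measures_kernel Hnu1) mC.
- exact: fine_probability_ge0.
- exact: measurable_fine_kernel_comp (is_cond_measures_kernel Hnu2) mC.
rewrite !integral_fine_cond //; apply: le_mu.
by apply: measurableI => //; rewrite -[_ @^-1` _]setTI; exact: mpi.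
Qed.

Lemma measurable_cross_term {nu nu' C} : is_kernel nu -> is_kernel nu' ->
  measurable C ->
  measurable_fun setT
    (fun x => (fine (nu (pi x) C))%:E * neg_ln (fine (nu' (pi x) C))).
Proof.
move=> knu knu' mC; apply: emeasurable_funM.
  exact/measurable_EFinP/(measurable_fine_kernel_comp knu mC).
exact: measurableT_comp measurable_neg_ln
  (measurable_fine_kernel_comp knu' mC).
Qed.

Lemma measurable_cross_entropy_comp {nu nu' n} {A : 'I_n -> set M} :
  is_kernel nu -> is_kernel nu' -> (forall i, measurable (A i)) ->
  measurable_fun setT (fun x => cross_entropy (nu (pi x)) (nu' (pi x)) A).
Proof.
move=> knu knu' mA; apply: emeasurable_sum => i.
exact: measurable_cross_term knu knu' (mA i).
Qed.

Lemma integral_cross_entropy {mu nu nu' n} {A : 'I_n -> set M} :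
  is_kernel nu -> is_kernel nu' -> (forall i, measurable (A i)) ->
  \int[mu]_x cross_entropy (nu (pi x)) (nu' (pi x)) A =
  \sum_i \int[mu]_x
    ((fine (nu (pi x) (A i)))%:E * neg_ln (fine (nu' (pi x) (A i)))).
Proof.
move=> knu knu' mA; apply: ge0_integral_sum => // [i|i x _].
  exact: measurable_cross_term knu knu' (mA i).
by rewrite mule_ge0 ?lee_fin ?fine_probability_ge0 ?neg_ln_ge0
  ?fine_probability_le1.
Qed.

Lemma cond_entropyE mu nu n (A : 'I_n -> set M) :
  cond_entropy mu pi nu A = \int[mu]_x cross_entropy (nu (pi x)) (nu (pi x)) A.
Proof. by apply: eq_integral => x _; rewrite entropyE. Qed.

Lemma cond_entropy_le_cross {mu nu nu' n} {A : 'I_n -> set M} :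
  finite_meas_partition A -> is_kernel nu -> is_kernel nu' ->
  cond_entropy mu pi nu A <=
  \int[mu]_x cross_entropy (nu (pi x)) (nu' (pi x)) A.
Proof.
move=> HA knu knu'; have [mA _] := HA.
rewrite cond_entropyE; apply: ge0_le_integral => // [x _|||x _].
- exact: cross_entropy_ge0.
- exact: (measurable_cross_entropy_comp knu knu mA).
- exact: (measurable_cross_entropy_comp knu knu' mA).
- by rewrite -entropyE; exact: entropy_le_cross.
Qed.

End conditional_entropy.

Theorem lemma3p2 (d : measure_display) (M : measurableType d)
  (d' : measure_display) (Y : measurableType d') (R : realType)
  (mu1 mu2 : {finite_measure set M -> \bar R})
  (m : {measure set M -> \bar R})
  (Hm : forall S, measurable S -> mu1 S = (mu2 S + m S)%E)
  (n : nat) (A : 'I_n -> set M) (HA : finite_meas_partition A)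
  (pi : M -> Y) (Hpi : measurable_fun setT pi)
  (nu1 nu2 : Y -> probability M R)
  (Hnu1 : is_cond_measures mu1 pi nu1)
  (Hnu2 : is_cond_measures mu2 pi nu2) :
  (cond_entropy mu2 pi nu2 A <= cond_entropy mu1 pi nu1 A)%E.
Proof.
have [mA _] := HA.
have knu1 := is_cond_measures_kernel Hnu1.
have knu2 := is_cond_measures_kernel Hnu2.
have le_mu S : measurable S -> (mu2 S <= mu1 S)%E.
  by move=> mS; rewrite Hm // leeDl.
apply: le_trans (cond_entropy_le_cross Hpi HA knu2 knu1) _.
rewrite cond_entropyE (integral_cross_entropy Hpi knu2 knu1 mA).
rewrite (integral_cross_entropy Hpi knu1 knu1 mA).
apply: lee_sum => i _.
apply: (le_integral_fine_cond Hpi (fun y => neg_ln (fine (nu1 y (A i))))) => //.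
- by move=> y; rewrite neg_ln_ge0 ?fine_probability_le1.
- apply: measurableT_comp measurable_neg_ln _.
  exact: measurable_fine_kernel knu1 (mA i).
Qed.
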